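(* Let $n\ge1$ be an integer and let $\phi:[0,\infty)\to(0,\infty)$ be differentiable and decreasing with $\phi(r)\to0$ as $r\to\infty$. Define $\widetilde\phi(r)=\min_{\delta>0}\big(\delta+\delta^{-2n}\phi(\delta^{2n+1}r)\big)$ for $r>0$, and let $t(r)$ be the unique solution $t$ of $t/\phi(t)=r$. Then $t(r)$ is differentiable and strictly increasing to $+\infty$, and $$\phi(t(r))^{\frac1{2n+1}}\le\widetilde\phi(r)\le 2\,\phi(t(r))^{\frac1{2n+1}},\qquad r>0.$$ *)

From Stdlib Require Import Reals.
From Coquelicot Require Import Coquelicot.
Open Scope R_scope.

Definition phi_obj (n : nat) (phi : R -> R) (r delta : R) : R :=
  delta + phi (delta ^ (2 * n + 1) * r) / delta ^ (2 * n).

(* phi-tilde(r) = inf over delta > 0 of phi_obj (the statement's "min";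
   attainment of the infimum is part of the theorem's conclusion). *)
Definition phitilde (n : nat) (phi : R -> R) (r : R) : R :=
  real (Glb_Rbar (fun v => exists delta, 0 < delta /\ v = phi_obj n phi r delta)).

From Stdlib Require Import Reals Lra Lia Ranalysis5.
From Coquelicot Require Import Coquelicot.
Open Scope R_scope.

(* Since phi is positive and nonincreasing, s |-> s / phi s is strictly
   increasing, unbounded and has a positive derivative, so its inverse t is
   well defined, increasing, differentiable and tends to +oo.
   Put a = phi(t(r))^(1/(2n+1)), so that a^(2n+1) r = t(r).  The choice
   delta = a makes both terms of the objective equal to a, giving the upper
   bound 2a.  For delta < a we have delta^(2n+1) r <= t(r), hence
   phi(delta^(2n+1) r) >= a^(2n+1) >= a delta^(2n); for delta >= a the first
   term alone is >= a.  The minimum exists because the objective is continuous,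
   exceeds delta, and is at least phi(r)/delta for delta <= 1 (as n >= 1). *)

Lemma derivable_pt_lim_nonpos (f : R -> R) (x l : R) :
  (forall y, x <= y -> f y <= f x) -> derivable_pt_lim f x l -> l <= 0.
Proof.
  intros f_nonincr f_der.
  destruct (Rle_lt_dec l 0) as [l_nonpos | l_pos]; [exact l_nonpos |].
  destruct (f_der l l_pos) as [d Hd].
  assert (d_pos := cond_pos d).
  assert (h_nz : d / 2 <> 0) by lra.
  assert (h_small : Rabs (d / 2) < d) by (rewrite Rabs_pos_eq; lra).
  specialize (Hd (d / 2) h_nz h_small).
  assert (quot_nonpos : (f (x + d / 2) - f x) / (d / 2) <= 0).
  { apply Rmult_le_0_r; [apply Rle_minus, f_nonincr; lra |].
    left; apply Rinv_0_lt_compat; lra. }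
  rewrite Rabs_left1 in Hd; lra.
Qed.

Lemma pow_le_1 (x : R) (k : nat) : 0 <= x <= 1 -> x ^ k <= 1.
Proof. intros hx. rewrite <- (pow1 k). apply pow_incr; lra. Qed.

Lemma Rpower_inv_INR_pow (x : R) (k : nat) :
  0 < x -> k <> 0%nat -> Rpower x (/ INR k) ^ k = x.
Proof.
  intros x_pos k_nz.
  assert (INR k <> 0) by (apply not_0_INR; exact k_nz).
  rewrite <- Rpower_pow by (unfold Rpower; apply exp_pos).
  rewrite Rpower_mult, Rinv_l by assumption.
  apply Rpower_1; exact x_pos.
Qed.

Section Ratio.

Variable phi : R -> R.
Hypothesis phi_pos : forall x, 0 <= x -> 0 < phi x.
Hypothesis phi_nonincr : forall x y, 0 <= x -> x <= y -> phi y <= phi x.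

Definition ratio (s : R) : R := s / phi s.

Lemma ratio_lt (s1 s2 : R) : 0 <= s1 -> s1 < s2 -> ratio s1 < ratio s2.
Proof.
  intros s1_nonneg lt12. unfold ratio, Rdiv.
  assert (phi2_pos : 0 < phi s2) by (apply phi_pos; lra).
  apply Rle_lt_trans with (s1 * / phi s2).
  - apply Rmult_le_compat_l; [exact s1_nonneg |].
    apply Rinv_le_contravar; [exact phi2_pos |].
    apply phi_nonincr; lra.
  - apply Rmult_lt_compat_r; [apply Rinv_0_lt_compat |]; assumption.
Qed.

Lemma ratio_le (s1 s2 : R) : 0 <= s1 -> s1 <= s2 -> ratio s1 <= ratio s2.
Proof.
  intros s1_nonneg le12. destruct (Req_dec s1 s2) as [-> | ne12]; [lra |].
  left; apply ratio_lt; lra.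
Qed.

Lemma ratio_inj (s1 s2 : R) : 0 <= s1 -> 0 <= s2 -> ratio s1 = ratio s2 -> s1 = s2.
Proof.
  intros s1_nonneg s2_nonneg e.
  destruct (Rtotal_order s1 s2) as [lt12 | [eq12 | lt21]]; [| exact eq12 |].
  - apply ratio_lt in lt12; lra.
  - apply ratio_lt in lt21; lra.
Qed.

Lemma ratio_ge_div_phi0 (s : R) : 0 <= s -> s / phi 0 <= ratio s.
Proof.
  intros s_nonneg. apply Rmult_le_compat_l; [exact s_nonneg |].
  apply Rinv_le_contravar; [apply phi_pos; lra |].
  apply phi_nonincr; lra.
Qed.

Hypothesis phi_derivable : forall x, 0 < x -> ex_derive phi x.

Lemma ratio_derivative_pos (x : R) :
  0 < x -> exists l, 0 < l /\ derivable_pt_lim ratio x l.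
Proof.
  intros x_pos. destruct (phi_derivable x x_pos) as [l phi_der].
  apply is_derive_Reals in phi_der.
  assert (l_nonpos : l <= 0).
  { apply (derivable_pt_lim_nonpos phi x); [| exact phi_der].
    intros y; apply phi_nonincr; lra. }
  assert (phix_pos := phi_pos x ltac:(lra)).
  exists ((1 * phi x - l * x) / (phi x)²). split.
  - apply Rdiv_lt_0_compat; [nra | unfold Rsqr; nra].
  - apply (derivable_pt_lim_div id phi x 1 l (derivable_pt_lim_id x) phi_der).
    lra.
Qed.

Lemma ratio_continuous (x : R) : 0 < x -> continuity_pt ratio x.
Proof.
  intros x_pos. destruct (ratio_derivative_pos x x_pos) as [l [_ der]].
  apply derivable_continuous_pt. exists l. exact der.
Qed.

Lemma ratio_surj (r : R) : 0 < r -> {s | 0 < s /\ ratio s = r}.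
Proof.
  intros r_pos.
  assert (phi0_pos := phi_pos 0 (Rle_refl 0)).
  assert (phi1_pos := phi_pos 1 ltac:(lra)).
  set (lo := Rmin 1 (r * phi 1 / 2)).
  assert (lo_pos : 0 < lo) by (apply Rmin_pos; [lra | apply Rdiv_lt_0_compat; nra]).
  assert (lo_le_1 : lo <= 1) by apply Rmin_l.
  assert (lo_small : lo <= r * phi 1 / 2) by apply Rmin_r.
  set (hi := r * phi 0 + 1).
  assert (hi_pos : 0 < hi) by (unfold hi; nra).
  assert (lo_lt_hi : lo < hi) by (unfold hi; nra).
  assert (ratio_lo : ratio lo < r).
  { assert (phi 1 <= phi lo) by (apply phi_nonincr; lra).
    unfold ratio; apply Rlt_div_l; [apply phi_pos; lra | nra]. }
  assert (ratio_hi : r < ratio hi).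
  { apply Rlt_le_trans with (hi / phi 0); [| apply ratio_ge_div_phi0; lra].
    apply Rlt_div_r; [exact phi0_pos | unfold hi; lra]. }
  destruct (IVT_Rbar_incr ratio lo hi (ratio lo) (ratio hi) r)
    as [s [lo_lt_s [s_lt_hi ratio_s]]];
    simpl in *.
  - apply is_lim_continuity, ratio_continuous; exact lo_pos.
  - apply is_lim_continuity, ratio_continuous; exact hi_pos.
  - intros x lo_lt_x _; apply ratio_continuous; lra.
  - exact lo_lt_hi.
  - split; assumption.
  - exists s. split; [lra | exact ratio_s].
Qed.

Definition ratio_inv (r : R) : R :=
  match Rlt_dec 0 r with
  | left r_pos => proj1_sig (ratio_surj r r_pos)
  | right _ => 0
  end.

Lemma ratio_invP (r : R) : 0 < r -> 0 < ratio_inv r /\ ratio (ratio_inv r) = r.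
Proof.
  intros r_pos. unfold ratio_inv.
  destruct (Rlt_dec 0 r) as [r_pos' | r_nonpos]; [| lra].
  exact (proj2_sig (ratio_surj r r_pos')).
Qed.

Lemma ratio_inv_fixed (r : R) : 0 < r -> ratio_inv r = r * phi (ratio_inv r).
Proof.
  intros r_pos. destruct (ratio_invP r r_pos) as [t_pos ratio_t].
  unfold ratio in ratio_t. rewrite <- ratio_t at 2.
  field. apply Rgt_not_eq, phi_pos; lra.
Qed.

Lemma ratio_inv_unique (r s : R) : 0 < r -> 0 <= s -> ratio s = r -> s = ratio_inv r.
Proof.
  intros r_pos s_nonneg ratio_s. destruct (ratio_invP r r_pos) as [t_pos ratio_t].
  apply ratio_inj; [exact s_nonneg | lra | congruence].
Qed.

Lemma ratio_inv_lt (r1 r2 : R) : 0 < r1 -> r1 < r2 -> ratio_inv r1 < ratio_inv r2.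
Proof.
  intros r1_pos lt12.
  destruct (ratio_invP r1 r1_pos) as [t1_pos ratio_t1].
  destruct (ratio_invP r2 ltac:(lra)) as [t2_pos ratio_t2].
  destruct (Rlt_le_dec (ratio_inv r1) (ratio_inv r2)) as [lt | ge]; [exact lt |].
  apply ratio_le in ge; lra.
Qed.

Lemma ratio_inv_derivable (r : R) : 0 < r -> ex_derive ratio_inv r.
Proof.
  intros r_pos. destruct (ratio_invP r r_pos) as [t_pos ratio_t].
  set (lb := ratio_inv r / 2). set (ub := ratio_inv r + 1).
  assert (lb_pos : 0 < lb) by (unfold lb; lra).
  assert (lb_lt_ub : lb < ub) by (unfold lb, ub; lra).
  assert (r_inside : ratio lb < r < ratio ub).
  { rewrite <- ratio_t. split; apply ratio_lt; unfold lb, ub; lra. }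
  assert (inv_inside : forall x, ratio lb <= x -> x <= ratio ub -> lb <= ratio_inv x <= ub).
  { intros x x_ge x_le.
    assert (ratio_lb_pos : 0 < ratio lb).
    { apply Rdiv_lt_0_compat; [exact lb_pos | apply phi_pos; lra]. }
    destruct (ratio_invP x ltac:(lra)) as [tx_pos ratio_tx].
    split.
    - destruct (Rle_lt_dec lb (ratio_inv x)) as [ge | lt]; [exact ge |].
      apply ratio_lt in lt; lra.
    - destruct (Rle_lt_dec (ratio_inv x) ub) as [le | gt]; [exact le |].
      apply ratio_lt in gt; lra. }
  assert (ratio_derivable : forall a, lb <= a <= ub -> derivable_pt ratio a).
  { intros a a_in. apply ex_derive_Reals_0.
    destruct (ratio_derivative_pos a ltac:(lra)) as [l [_ der]].
    exists l; apply is_derive_Reals; exact der. }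
  apply ex_derive_Reals_1.
  apply (derivable_pt_recip_interv ratio ratio_inv lb ub r lb_lt_ub r_inside)
    with (g_wf := inv_inside) (f_derivable := ratio_derivable).
  - intros x x_ge x_le. apply ratio_invP.
    apply Rlt_le_trans with (ratio lb); [| exact x_ge].
    apply Rdiv_lt_0_compat; [exact lb_pos | apply phi_pos; lra].
  - intros x y x_ge lt y_le. apply ratio_lt; lra.
  - destruct (ratio_derivative_pos (ratio_inv r) t_pos) as [l [l_pos der]].
    rewrite (derive_pt_eq_0 _ _ _ _ der). lra.
Qed.

Lemma ratio_inv_lim : is_lim ratio_inv p_infty p_infty.
Proof.
  apply is_lim_spec. intros M. simpl.
  set (M' := Rmax M 1).
  assert (M'_ge_1 : 1 <= M') by apply Rmax_r.
  assert (M'_ge_M : M <= M') by apply Rmax_l.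
  exists (Rmax 1 (ratio M')). intros x x_large.
  assert (x_gt_1 : 1 < x) by (eapply Rle_lt_trans; [apply Rmax_l | exact x_large]).
  assert (x_gt : ratio M' < x) by (eapply Rle_lt_trans; [apply Rmax_r | exact x_large]).
  destruct (ratio_invP x ltac:(lra)) as [t_pos ratio_t].
  destruct (Rle_lt_dec (ratio_inv x) M') as [le | gt]; [| lra].
  apply ratio_le in le; lra.
Qed.

End Ratio.

Lemma phitilde_eq_min (n : nat) (phi : R -> R) (r delta : R) :
  0 < delta ->
  (forall delta', 0 < delta' -> phi_obj n phi r delta <= phi_obj n phi r delta') ->
  phitilde n phi r = phi_obj n phi r delta.
Proof.
  intros delta_pos delta_min. unfold phitilde.
  rewrite (is_glb_Rbar_unique _ (Finite (phi_obj n phi r delta))); [reflexivity |].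
  split.
  - intros v [delta' [delta'_pos ->]]. apply delta_min; exact delta'_pos.
  - intros b b_lb. apply b_lb. exists delta; split; [exact delta_pos | reflexivity].
Qed.

Section Objective.

Variable n : nat.
Variable phi : R -> R.
Hypothesis phi_pos : forall x, 0 <= x -> 0 < phi x.
Hypothesis phi_nonincr : forall x y, 0 <= x -> x <= y -> phi y <= phi x.

Lemma phi_obj_gt (r delta : R) : 0 <= r -> 0 < delta -> delta < phi_obj n phi r delta.
Proof.
  intros r_nonneg delta_pos. unfold phi_obj.
  enough (0 < phi (delta ^ (2 * n + 1) * r) / delta ^ (2 * n)) by lra.
  apply Rdiv_lt_0_compat; [| apply pow_lt; exact delta_pos].
  apply phi_pos, Rmult_le_pos; [apply pow_le |]; lra.
Qed.

Lemma phi_obj_ge_root (r t a : R) :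
  0 <= r -> 0 < a -> t = r * phi t -> a ^ (2 * n + 1) = phi t ->
  forall delta, 0 < delta -> a <= phi_obj n phi r delta.
Proof.
  intros r_nonneg a_pos t_eq a_pow delta delta_pos.
  destruct (Rlt_le_dec delta a) as [delta_lt | delta_ge].
  2: { assert (delta < phi_obj n phi r delta) by (apply phi_obj_gt; assumption). lra. }
  assert (delta_pow_pos : 0 < delta ^ (2 * n)) by (apply pow_lt; exact delta_pos).
  assert (delta_pow_le : delta ^ (2 * n) <= a ^ (2 * n)) by (apply pow_incr; lra).
  assert (arg_le_t : delta ^ (2 * n + 1) * r <= t).
  { rewrite t_eq, <- a_pow, Rmult_comm.
    apply Rmult_le_compat_l; [exact r_nonneg | apply pow_incr; lra]. }
  assert (phi_ge : a * a ^ (2 * n) <= phi (delta ^ (2 * n + 1) * r)).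
  { replace (a * a ^ (2 * n)) with (a ^ (2 * n + 1)) by (rewrite Nat.add_1_r; reflexivity).
    rewrite a_pow. apply phi_nonincr; [| exact arg_le_t].
    apply Rmult_le_pos; [apply pow_le |]; lra. }
  unfold phi_obj.
  enough (a <= phi (delta ^ (2 * n + 1) * r) / delta ^ (2 * n)) by lra.
  apply Rle_div_r; [exact delta_pow_pos | nra].
Qed.

Lemma phi_obj_at_root (r t a : R) :
  0 < a -> t = r * phi t -> a ^ (2 * n + 1) = phi t -> phi_obj n phi r a = 2 * a.
Proof.
  intros a_pos t_eq a_pow. unfold phi_obj.
  replace (a ^ (2 * n + 1) * r) with t by (rewrite a_pow; lra).
  rewrite <- a_pow, Nat.add_1_r. simpl.
  field. apply pow_nonzero; lra.
Qed.

Hypothesis n_pos : (1 <= n)%nat.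
Hypothesis phi_derivable : forall x, 0 < x -> ex_derive phi x.

Lemma phi_obj_continuous (r delta : R) :
  0 < r -> 0 < delta -> continuity_pt (phi_obj n phi r) delta.
Proof.
  intros r_pos delta_pos. apply continuity_pt_filterlim.
  apply (ex_derive_continuous (phi_obj n phi r)).
  unfold phi_obj. auto_derive. repeat split.
  - apply phi_derivable. replace (n + (n + 0) + 1)%nat with (2 * n + 1)%nat by lia.
    apply Rmult_lt_0_compat; [apply pow_lt |]; assumption.
  - apply pow_nonzero; lra.
Qed.

Lemma phi_obj_ge_small (r delta : R) :
  0 < r -> 0 < delta <= 1 -> phi r / delta <= phi_obj n phi r delta.
Proof.
  intros r_pos [delta_pos delta_le_1].
  assert (delta_pow_pos : 0 < delta ^ (2 * n)) by (apply pow_lt; exact delta_pos).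
  assert (delta_pow_le : delta ^ (2 * n) <= delta).
  { replace (2 * n)%nat with (S (2 * n - 1)) by lia. rewrite <- tech_pow_Rmult.
    assert (delta ^ (2 * n - 1) <= 1) by (apply pow_le_1; lra).
    assert (0 <= delta ^ (2 * n - 1)) by (apply pow_le; lra). nra. }
  assert (arg_le_r : delta ^ (2 * n + 1) * r <= r).
  { assert (delta ^ (2 * n + 1) <= 1) by (apply pow_le_1; lra). nra. }
  assert (phi_ge : phi r <= phi (delta ^ (2 * n + 1) * r)).
  { apply phi_nonincr; [| exact arg_le_r].
    apply Rmult_le_pos; [apply pow_le |]; lra. }
  assert (phir_pos := phi_pos r ltac:(lra)).
  unfold phi_obj.
  enough (phi r / delta <= phi (delta ^ (2 * n + 1) * r) / delta ^ (2 * n)) by lra.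
  unfold Rdiv. apply Rle_trans with (phi r * / delta ^ (2 * n)).
  - apply Rmult_le_compat_l; [lra |]. apply Rinv_le_contravar; assumption.
  - apply Rmult_le_compat_r; [left; apply Rinv_0_lt_compat |]; assumption.
Qed.

Lemma phi_obj_has_min (r : R) :
  0 < r -> exists delta, 0 < delta /\
    forall delta', 0 < delta' -> phi_obj n phi r delta <= phi_obj n phi r delta'.
Proof.
  intros r_pos.
  set (C := phi_obj n phi r 1).
  assert (C_gt_1 : 1 < C) by (apply phi_obj_gt; lra).
  assert (phir_pos := phi_pos r ltac:(lra)).
  set (e := Rmin (1 / 2) (phi r / (C + 1))).
  assert (e_pos : 0 < e) by (apply Rmin_pos; [lra | apply Rdiv_lt_0_compat; lra]).
  assert (e_le_half : e <= 1 / 2) by apply Rmin_l.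
  assert (e_small : e * (C + 1) <= phi r) by (apply Rle_div_r; [lra | apply Rmin_r]).
  destruct (continuity_ab_min (phi_obj n phi r) e (C + 1)) as [delta [delta_min delta_in]].
  - lra.
  - intros c c_in. apply phi_obj_continuous; lra.
  - exists delta. split; [lra |].
    assert (le_C : phi_obj n phi r delta <= C) by (apply delta_min; lra).
    intros delta' delta'_pos.
    destruct (Rle_lt_dec delta' e) as [le_e | gt_e].
    + assert (phi r / delta' <= phi_obj n phi r delta') by (apply phi_obj_ge_small; lra).
      assert (C + 1 <= phi r / delta') by (apply Rle_div_r; nra).
      lra.
    + destruct (Rle_lt_dec delta' (C + 1)) as [le_C1 | gt_C1]; [apply delta_min; lra |].
      assert (delta' < phi_obj n phi r delta') by (apply phi_obj_gt; lra).
      lra.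
Qed.

Lemma phitilde_attained (r : R) :
  0 < r -> exists delta, 0 < delta /\
    (forall delta', 0 < delta' -> phi_obj n phi r delta <= phi_obj n phi r delta') /\
    phitilde n phi r = phi_obj n phi r delta.
Proof.
  intros r_pos. destruct (phi_obj_has_min r r_pos) as [delta [delta_pos delta_min]].
  exists delta. split; [exact delta_pos |]. split; [exact delta_min |].
  apply phitilde_eq_min; assumption.
Qed.

End Objective.

Theorem lemma2 (n : nat) (phi : R -> R)
  (hn : (1 <= n)%nat)
  (hpos : forall x, 0 <= x -> 0 < phi x)
  (hder : forall x, 0 < x -> ex_derive phi x)
  (hder0 : exists l : R,
      filterlim (fun h => (phi h - phi 0) / h) (at_right 0) (locally l))
  (hdec : forall x y, 0 <= x -> x <= y -> phi y <= phi x)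
  (hlim : is_lim phi p_infty 0) :
  (* the infimum defining phi-tilde is a minimum *)
  (forall r, 0 < r -> exists delta, 0 < delta /\
      (forall delta', 0 < delta' -> phi_obj n phi r delta <= phi_obj n phi r delta') /\
      phitilde n phi r = phi_obj n phi r delta) /\
  exists t : R -> R,
    (* t(r) is the unique solution t >= 0 of t / phi(t) = r *)
    (forall r, 0 < r -> 0 <= t r /\ t r / phi (t r) = r) /\
    (forall r s, 0 < r -> 0 <= s -> s / phi s = r -> s = t r) /\
    (* t is differentiable and strictly increasing to +oo *)
    (forall r, 0 < r -> ex_derive t r) /\
    (forall r1 r2, 0 < r1 -> r1 < r2 -> t r1 < t r2) /\
    is_lim t p_infty p_infty /\
    (* the two-sided estimate *)
    (forall r, 0 < r ->
       Rpower (phi (t r)) (/ INR (2 * n + 1)) <= phitilde n phi r /\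
       phitilde n phi r <= 2 * Rpower (phi (t r)) (/ INR (2 * n + 1))).
Proof.
  set (t := ratio_inv phi hpos hdec hder).
  split; [exact (phitilde_attained n phi hpos hdec hn hder) |]. exists t.
  refine (conj _ (conj _ (conj _ (conj _ (conj _ _))))).
  - intros r r_pos. destruct (ratio_invP phi hpos hdec hder r r_pos) as [t_pos ratio_t].
    split; [left |]; assumption.
  - intros r s r_pos. apply ratio_inv_unique; exact r_pos.
  - intros r r_pos. apply ratio_inv_derivable; exact r_pos.
  - intros r1 r2. apply ratio_inv_lt.
  - apply ratio_inv_lim.
  - intros r r_pos. assert (t_pos := proj1 (ratio_invP phi hpos hdec hder r r_pos)).
    assert (t_eq := ratio_inv_fixed phi hpos hdec hder r r_pos).
    fold t in t_pos, t_eq.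
    assert (a_pow := Rpower_inv_INR_pow (phi (t r)) (2 * n + 1) (hpos (t r) ltac:(lra)) ltac:(lia)).
    assert (a_pos : 0 < Rpower (phi (t r)) (/ INR (2 * n + 1))) by apply exp_pos.
    destruct (phitilde_attained n phi hpos hdec hn hder r r_pos) as [delta [delta_pos [delta_min ->]]].
    split.
    + apply (phi_obj_ge_root n phi hpos hdec r (t r)); [lra | assumption ..].
    + rewrite <- (phi_obj_at_root n phi r (t r)) by assumption. apply delta_min; exact a_pos.
Qed.
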